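(* Let $n\geq 2$ be an integer and let $G$ be a tree of order $m\geq 3$. Then $\chi_{ld}(G[\overline{K_{n}}])=2$ if and only if $G$ is a star $K_{1,m-1}$.
   Context: All graphs are finite, simple and undirected. For a graph $G=(V,E)$ of order $N$ without isolated vertices, a bijection $f\colon V\to\{1,2,\dots,N\}$ is a local distance antimagic labeling if $w(u)\neq w(v)$ for every edge $uv$, where $w(u)=\sum_{x\in N(u)}f(x)$ and $N(u)$ is the open neighborhood of $u$. $\chi_{ld}(G)$ is the minimum number of distinct weights over all local distance antimagic labelings of $G$. $\overline{K_n}$ is the edgeless graph on $n$ vertices. The lexicographic product $G[H]$ has vertex set $V(G)\times V(H)$, with $(g,h)$ adjacent to $(g',h')$ iff $gg'\in E(G)$, or $g=g'$ and $hh'\in E(H)$. *)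

From mathcomp Require Import all_boot.
Set Implicit Arguments. Unset Strict Implicit. Unset Printing Implicit Defensive.

Definition simple_graph (T : finType) (e : rel T) : Prop :=
  symmetric e /\ irreflexive e.

Definition connected_graph (T : finType) (e : rel T) : Prop :=
  forall x y : T, connect e x y.

Definition acyclic_graph (T : finType) (e : rel T) : Prop :=
  ~ exists s : seq T, [/\ uniq s, 3 <= size s & cycle e s].

Definition is_tree (T : finType) (e : rel T) : Prop :=
  connected_graph e /\ acyclic_graph e.

Definition is_star (T : finType) (e : rel T) : Prop :=
  exists c : T, forall u v : T, e u v = (u != v) && ((u == c) || (v == c)).

Definition edgeless (U : finType) : rel U := fun _ _ => false.

Definition lexprod (T U : finType) (e : rel T) (h : rel U) : rel (T * U) :=
  fun p q => e p.1 q.1 || ((p.1 == q.1) && h p.2 q.2).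

Definition weight (V : finType) (e : rel V) (f : V -> nat) (u : V) : nat :=
  \sum_(x : V | e u x) f x.

Definition is_labeling (V : finType) (f : V -> nat) : Prop :=
  injective f /\ forall v, 1 <= f v <= #|V|.

Definition no_isolated (V : finType) (e : rel V) : Prop :=
  forall u : V, exists v : V, e u v.

Definition is_ld_antimagic (V : finType) (e : rel V) (f : V -> nat) : Prop :=
  is_labeling f /\ forall u v : V, e u v -> weight e f u != weight e f v.

Definition num_weights (V : finType) (e : rel V) (f : V -> nat) : nat :=
  size (undup [seq weight e f u | u <- enum V]).

Definition chi_ld_is (V : finType) (e : rel V) (k : nat) : Prop :=
  no_isolated e /\
  (exists f, is_ld_antimagic e f /\ num_weights e f = k) /\
  (forall f, is_ld_antimagic e f -> k <= num_weights e f).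

(* In G[K_n-bar] the weight of (g, i) is the sum, over the neighbours g' of g,
   of the fibre sums S(g') = f(g', 0) + ... + f(g', n-1).  If the tree G is not
   a star it contains a path on four vertices; extending it to a maximal path
   yields a leaf b with neighbour v1, a neighbour v2 of v1 and a neighbour
   v3 <> v1 of v2.  Then w(b) = S(v1) < S(v1) + S(v3) <= w(v2), and w(v1)
   differs from both as v1 is adjacent to b and v2: three weights.  On a star
   with centre c each leaf has weight S(c) and the centre the sum of all other
   fibre sums, so a labeling giving the fibre of c the n smallest labels has
   exactly two weights. *)

From mathcomp Require Import all_boot.
From mathcomp Require Import perm zify.

Set Implicit Arguments.
Unset Strict Implicit.
Unset Printing Implicit Defensive.

Section Trees.
Variables (T : finType) (e : rel T).
Hypotheses (e_sym : symmetric e) (e_irr : irreflexive e).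

Lemma maximal_path_extension a t : uniq (a :: t) -> path e a t ->
  exists b u, [/\ uniq (b :: u), path e b u, size t <= size u
                & forall y, e b y -> y \in b :: u].
Proof.
have [k] := ubnP (#|T| - size t); elim: k a t => // k IH a t lt_k uq pt.
case: (boolP [exists y, e a y && (y \notin a :: t)]); last first.
  move/existsPn=> saturated; exists a, t; split=> // y eay.
  by move: (saturated y); rewrite eay negbK.
case/existsP=> y /andP[eay y_new].
have uq' : uniq (y :: a :: t) by rewrite /= y_new.
have size_le : size (y :: a :: t) <= #|T| by rewrite -(card_uniqP uq') max_card.
have pt' : path e y (a :: t) by rewrite /= e_sym eay.
have [|b [u [uq_b pt_b size_u nb_b]]] := IH y (a :: t) _ uq' pt'.
  by move: size_le lt_k => /=; lia.
by exists b, u; split=> //; apply: leq_trans size_u.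
Qed.

Lemma maximal_path_head_leaf b v u : acyclic_graph e ->
    uniq (b :: v :: u) -> path e b (v :: u) ->
  (forall y, e b y -> y \in b :: v :: u) -> forall y, e b y -> y = v.
Proof.
move=> acyc uq pt nb y eby.
have y_in : y \in v :: u.
  by move: (nb y eby); rewrite inE => /predU1P[E|//]; rewrite E e_irr in eby.
have [p1 [p2 def_vu]] : exists p1 p2, v :: u = p1 ++ y :: p2.
  by case/splitPr: y_in => p1 p2; exists p1, p2.
case: p1 def_vu => [[->]//|a p def_vu]; rewrite def_vu in uq pt.
case: acyc; exists (b :: rcons (a :: p) y); split.
- apply: subseq_uniq uq; rewrite /= eqxx -cats1 eqxx.
  by apply: cat_subseq (subseq_refl _) _; rewrite /= eqxx sub0seq.
- by rewrite /= size_rcons.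
- move: pt => /= /andP[-> ]; rewrite cat_path /= => /andP[pp /andP[ey _]].
  by rewrite !rcons_path last_rcons pp ey e_sym eby.
Qed.

Lemma pendant_path_of_P4 x y z u : acyclic_graph e ->
    e x y -> e y z -> e z u -> x != z -> y != u ->
  exists b v1 v2 v3,
    [/\ forall w, e b w -> w = v1, e b v1, e v1 v2, e v2 v3 & v3 != v1].
Proof.
move=> acyc exy eyz ezu xz yu.
have ne_of_edge a c : e a c -> a != c by apply: contraTneq => ->; rewrite e_irr.
have xu : x != u.
  apply/eqP=> xu; subst u; apply: acyc; exists [:: x; y; z].
  by rewrite /= !inE !negb_or exy eyz ezu xz !ne_of_edge.
have uq : uniq [:: x; y; z; u] by rewrite /= !inE !negb_or xz xu yu !ne_of_edge.
have pt : path e x [:: y; z; u] by rewrite /= exy eyz ezu.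
have [b [[|v1 [|v2 [|v3 w]]] [uq_b pt_b size_w nb_b]]] :=
  maximal_path_extension uq pt => //.
have v31 : v3 != v1 by apply: contraTneq uq_b => ->; rewrite /= !inE eqxx !orbT andbF.
have leaf := maximal_path_head_leaf acyc uq_b pt_b nb_b.
by move: pt_b => /= /and4P[ebv1 ev12 ev23 _]; exists b, v1, v2, v3.
Qed.

Hypothesis con : connected_graph e.

Lemma connected_closed_everywhere (P : pred T) x :
  P x -> (forall a b, P a -> e a b -> P b) -> forall y, P y.
Proof.
move=> Px clP y; have /connectP[p + ->] := con x y.
by elim: p x Px => //= a p IH x Px /andP[exa]; apply: IH (clP _ _ Px exa).
Qed.

Hypothesis P4free :
  forall x y z u, e x y -> e y z -> e z u -> x != z -> y != u -> False.

Lemma star_of_P4free_branching y z1 z2 :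
  e y z1 -> e y z2 -> z1 != z2 -> is_star e.
Proof.
move=> eyz1 eyz2 z12.
have nb_leaf u q : e y u -> e u q -> q = y.
  move=> eyu euq; apply/eqP; apply/negPn/negP => qy.
  have [z eyz zu] : exists2 z, e y z & z != u.
    by case: (eqVneq z1 u) => [<-|]; [exists z2; rewrite // eq_sym | exists z1].
  by apply: (P4free _ eyu euq zu); rewrite 1?e_sym 1?eq_sym.
have near_y v : (v == y) || e y v.
  apply: (@connected_closed_everywhere [pred v | (v == y) || e y v] y) => /=.
    by rewrite eqxx.
  by move=> a b /orP[/eqP-> ->|eya /(nb_leaf a b eya)->]; rewrite ?eqxx ?orbT.
exists y => u v; apply/idP/andP => [euv | [uv]].
  have uv : u != v by apply: contraTneq euv => E; rewrite E e_irr.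
  split=> //; case/orP: (near_y u) => [->//|/nb_leaf/(_ euv)->].
  by rewrite eqxx orbT.
case/orP=> /eqP E; rewrite E in uv *.
  by case/orP: (near_y v) => [/eqP E'|//]; rewrite E' eqxx in uv.
by case/orP: (near_y u) => [/eqP E'|]; [rewrite E' eqxx in uv | rewrite e_sym].
Qed.

Lemma card_le2_of_degree_le1 :
  (forall y z1 z2, e y z1 -> e y z2 -> z1 = z2) -> #|T| <= 2.
Proof.
move=> deg1; case: (posnP #|T|) => [->//|/card_gt0P[x _]].
have near_x v : (v == x) || e x v.
  apply: (@connected_closed_everywhere [pred v | (v == x) || e x v] x) => /=.
    by rewrite eqxx.
  move=> a b /orP[/eqP-> ->|exa eab]; first by rewrite orbT.
  by rewrite (deg1 a b x eab) ?eqxx // e_sym.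
case: (pickP (e x)) => [y exy | no_nb].
  apply: (@leq_trans #|[set x; y]|); last by rewrite cards2; case: (x != y).
  apply/subset_leq_card/subsetP => v _.
  by case/orP: (near_x v) => [/eqP->|/(deg1 _ _ _ exy)<-]; rewrite !inE eqxx ?orbT.
apply: (@leq_trans #|[set x]|); last by rewrite cards1.
apply/subset_leq_card/subsetP => v _.
by case/orP: (near_x v) => [/eqP->|]; rewrite ?inE ?eqxx ?no_nb.
Qed.

Lemma star_of_P4free : 3 <= #|T| -> is_star e.
Proof.
move=> T_ge3.
case: (boolP [exists y, exists z1, exists z2, [&& e y z1, e y z2 & z1 != z2]]).
  case/existsP=> y /existsP[z1 /existsP[z2 /and3P[]]].
  exact: star_of_P4free_branching.
move/existsPn=> no_branch; suff: #|T| <= 2 by rewrite leqNgt T_ge3.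
apply: card_le2_of_degree_le1 => y z1 z2 eyz1 eyz2; apply/eqP.
by move: (no_branch y) => /existsPn/(_ z1)/existsPn/(_ z2); rewrite eyz1 eyz2 negbK.
Qed.

End Trees.

Lemma leq_size_undup_map (V : finType) (R : eqType) (w : V -> R) (s : seq V) :
  uniq (map w s) -> size s <= size (undup [seq w u | u <- enum V]).
Proof.
move=> uq; rewrite -(size_map w); apply: uniq_leq_size uq _ => _ /mapP[u _ ->].
by rewrite mem_undup map_f ?mem_enum.
Qed.

Lemma size_undup_map_leq (V : finType) (R : eqType) (w : V -> R) (ws : seq R) :
  (forall u, w u \in ws) -> size (undup [seq w u | u <- enum V]) <= size ws.
Proof.
move=> ws_w; apply: uniq_leq_size (undup_uniq _) _ => x.
by rewrite mem_undup => /mapP[u _ ->].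
Qed.

Lemma num_weights_ge2 (V : finType) (e : rel V) f u v :
  is_ld_antimagic e f -> e u v -> 2 <= num_weights e f.
Proof.
move=> [_ am] euv; apply: (leq_size_undup_map (s := [:: u; v])).
by rewrite /= inE am.
Qed.

Lemma exists_rank_zero_at (T : finType) (c : T) :
  exists r : T -> nat, [/\ injective r, forall g, r g < #|T| & r c = 0].
Proof.
have T_gt0 : 0 < #|T| by apply/card_gt0P; exists c.
pose c0 := enum_val (Ordinal T_gt0 : 'I_#|T|).
exists (fun g => enum_rank (tperm c c0 g) : nat); split=> [g g' | g |].
- by move/val_inj/enum_rank_inj/perm_inj.
- exact: ltn_ord.
- by rewrite tpermL enum_valK.
Qed.

Definition star_centred_at (T : finType) (e : rel T) (c : T) : Prop :=
  forall u v, e u v = (u != v) && ((u == c) || (v == c)).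

Section LexprodEdgeless.
Variables (T : finType) (e : rel T) (n : nat).
Local Notation Gn := (lexprod e (@edgeless 'I_n)).

Definition fibre_sum (f : T * 'I_n -> nat) (g : T) : nat := \sum_(j < n) f (g, j).

Lemma weight_lexprod_edgeless f g i :
  weight Gn f (g, i) = \sum_(g' | e g g') fibre_sum f g'.
Proof.
rewrite /weight /lexprod /edgeless /= pair_big_dep /=.
by apply: eq_big => [[a b]|[a b] _] /=; rewrite ?andbF ?orbF ?andbT.
Qed.

Lemma three_weights_of_pendant_path f (i : 'I_n) b v1 v2 v3 : symmetric e ->
    is_ld_antimagic Gn f -> (forall w, e b w -> w = v1) ->
    e b v1 -> e v1 v2 -> e v2 v3 -> v3 != v1 ->
  3 <= num_weights Gn f.
Proof.
move=> e_sym [[_ f_ge1] am] leaf ebv1 ev12 ev23 v31.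
have w_b : weight Gn f (b, i) = fibre_sum f v1.
  rewrite weight_lexprod_edgeless (eq_bigl (pred1 v1)) ?big_pred1_eq // => g.
  by apply/idP/eqP => [/leaf|->].
have fs_v3 : 0 < fibre_sum f v3.
  by rewrite /fibre_sum (bigD1 i) //= addn_gt0; case/andP: (f_ge1 (v3, i)) => ->.
have w_v2 : fibre_sum f v1 + fibre_sum f v3 <= weight Gn f (v2, i).
  have ev21 : e v2 v1 by rewrite e_sym.
  rewrite weight_lexprod_edgeless (bigD1 v1) // (bigD1 v3) /= ?ev23 ?v31 //.
  by rewrite addnA leq_addr.
have edge g g' : e g g' -> Gn (g, i) (g', i) by rewrite /lexprod /= => ->.
apply: (leq_size_undup_map (s := [:: (b, i); (v1, i); (v2, i)])).
have := am _ _ (edge _ _ ebv1); have := am _ _ (edge _ _ ev12).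
rewrite /= !inE !negb_or => -> ->; rewrite w_b neq_ltn (leq_trans _ w_v2) //.
by rewrite -addn1 leq_add2l.
Qed.

Lemma weight_lexprod_star f c : star_centred_at e c -> forall p,
  weight Gn f p = if p.1 == c then \sum_(g | g != c) fibre_sum f g else fibre_sum f c.
Proof.
move=> hc [g i]; rewrite weight_lexprod_edgeless /=; case: (eqVneq g c) => [->|gc].
  by apply: eq_bigl => g'; rewrite hc eqxx orTb andbT eq_sym.
rewrite (eq_bigl (pred1 c)) ?big_pred1_eq // => g'.
by rewrite hc (negbTE gc) /=; case: (eqVneq g' c) => [->|]; rewrite ?andbT ?andbF ?gc.
Qed.

Lemma star_num_weights_le2 f c : star_centred_at e c -> num_weights Gn f <= 2.
Proof.
move=> hc; rewrite /num_weights.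
pose ws := [:: \sum_(g | g != c) fibre_sum f g; fibre_sum f c].
apply: (size_undup_map_leq (ws := ws)) => p.
by rewrite (weight_lexprod_star _ hc) !inE; case: ifP; rewrite eqxx ?orbT.
Qed.

Lemma star_ld_antimagic f c : star_centred_at e c -> is_labeling f ->
  fibre_sum f c != \sum_(g | g != c) fibre_sum f g -> is_ld_antimagic Gn f.
Proof.
move=> hc f_lab ne; split=> // [[g i] [g' i']].
rewrite /lexprod /edgeless /= andbF orbF hc !(weight_lexprod_star _ hc) /=.
case/andP=> gg' /orP[]/eqP E; rewrite E eqxx /= in gg' *.
  by rewrite eq_sym in gg'; rewrite (negbTE gg') eq_sym.
by rewrite (negbTE gg').
Qed.

Definition block_label (r : T -> nat) (p : T * 'I_n) : nat := (r p.1 * n + p.2).+1.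

Lemma block_label_is_labeling r :
  injective r -> (forall g, r g < #|T|) -> is_labeling (block_label r).
Proof.
move=> r_inj r_lt; split=> [[g i] [g' i'] /= [] E | [g i]]; last first.
  rewrite /block_label /= card_prod card_ord.
  by have := r_lt g; have := ltn_ord i; nia.
have n_gt0 : 0 < n := leq_ltn_trans (leq0n i) (ltn_ord i).
have ii' : i = i' :> nat by have := congr1 (modn^~ n) E; rewrite !modnMDl !modn_small.
move: E; rewrite ii' => /addIn/eqP; rewrite eqn_pmul2r // => /eqP/r_inj->.
by congr pair; apply: val_inj.
Qed.

Lemma fibre_sum_block_label r g :
  fibre_sum (block_label r) g = n * (r g * n) + \sum_(j < n) j.+1.
Proof.
rewrite /fibre_sum /block_label /=; under eq_bigr do rewrite -addnS.
by rewrite big_split /= sum_nat_const card_ord.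
Qed.

Lemma chi_ld_lexprod_star : is_star e -> 1 < #|T| -> 0 < n -> chi_ld_is Gn 2.
Proof.
move=> [c hc] T_gt1 n_gt0; pose i0 : 'I_n := Ordinal n_gt0.
have /card_gt0P[g1] : 0 < #|predC1 c| by rewrite cardC1 -subn1 subn_gt0.
rewrite inE => g1c; have ecg1 : e c g1 by rewrite hc eq_sym g1c eqxx.
have edge : Gn (c, i0) (g1, i0) by rewrite /lexprod /= ecg1.
have [r [r_inj r_lt r_c]] := exists_rank_zero_at c.
pose f := block_label r.
have fs_lt : fibre_sum f c < \sum_(g | g != c) fibre_sum f g.
  rewrite (bigD1 g1) //= !fibre_sum_block_label r_c mul0n muln0 add0n.
  apply: leq_trans (leq_addr _ _); rewrite -[X in X < _]add0n ltn_add2r.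
  by rewrite !muln_gt0 n_gt0 lt0n -r_c (inj_eq r_inj) g1c.
have f_am : is_ld_antimagic Gn f.
  apply: star_ld_antimagic hc (block_label_is_labeling r_inj r_lt) _.
  exact: negbT (ltn_eqF fs_lt).
split; [|split].
- move=> [g i]; exists (if g == c then g1 else c, i); rewrite /lexprod /= hc.
  case: (eqVneq g c) => [->|gc]; first by rewrite eq_sym g1c.
  by rewrite gc eqxx orbT.
- exists f; split=> //; apply/eqP.
  by rewrite eqn_leq (star_num_weights_le2 _ hc) (num_weights_ge2 f_am edge).
- by move=> f' f'_am; apply: num_weights_ge2 f'_am edge.
Qed.

End LexprodEdgeless.

Theorem mainTheorem9 (n : nat) (T : finType) (e : rel T) :
  simple_graph e -> 2 <= n -> 3 <= #|T| -> is_tree e ->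
  (chi_ld_is (lexprod e (@edgeless 'I_n)) 2 <-> is_star e).
Proof.
move=> [e_sym e_irr] n_ge2 T_ge3 [con acyc]; have n_gt0 : 0 < n := ltnW n_ge2.
split=> [[_ [[f [f_am f_num]] _]] | star_e]; last first.
  exact: chi_ld_lexprod_star star_e (ltnW T_ge3) n_gt0.
apply: (star_of_P4free e_sym e_irr con) T_ge3 => x y z u exy eyz ezu xz yu.
have [b [v1 [v2 [v3 [leaf ebv1 ev12 ev23 v31]]]]] :=
  pendant_path_of_P4 e_sym e_irr acyc exy eyz ezu xz yu.
have := three_weights_of_pendant_path (Ordinal n_gt0) e_sym f_am
  leaf ebv1 ev12 ev23 v31.
by rewrite f_num.
Qed.
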